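(* Let $r\geq1$ be odd, $m\geq 3$, $n=(r+1)m$, let $u$ be an integer with $\gcd(u,2^m-1)=1$, let $\alpha$ be a primitive element of $\mathbb{F}_{2^{rm}}$, and let $0\leq s,l\leq 2^{rm}-2$ be integers. For $0\le k\le 2^{rm}-2$ let $\Delta_k=\{\alpha^i\mid k\leq i\leq k+2^{rm-1}-1\}$. Let $F\colon\mathbb{F}_{2^{rm}}\times\mathbb{F}_{2^m}\to\mathbb{F}_2$ be the Boolean function with $$\mathrm{supp}(F)=\{(\gamma y^u,y)\mid y\in\mathbb{F}_{2^m}^*,\ \gamma\in\Delta_s\}\cup\{(\gamma,0)\mid\gamma\in\Delta_l\}.$$ Then the bivariate representation of $F$ over $\mathbb{F}_{2^{rm}}\times\mathbb{F}_{2^m}$ is $$F(x,y)=\sum_{\substack{i=1\\(2^m-1)\nmid i}}^{2^{rm}-2}\alpha^{-is}(1+\alpha^{-i})^{2^{rm-1}-1}x^iy^{2^m-1-\overline{ui}}+\sum_{j=1}^{\frac{2^{rm}-1}{2^m-1}-1}\alpha^{-(2^m-1)js}\bigl(1+\alpha^{-(2^m-1)j}\bigr)^{2^{rm-1}-1}x^{(2^m-1)j}y^{2^m-1}$$ $$\qquad+\sum_{i=1}^{2^{rm}-2}\alpha^{-il}(1+\alpha^{-i})^{2^{rm-1}-1}x^i(1+y^{2^m-1}),$$ where $\overline{ui}$ denotes the reduction of $ui$ modulo $2^m-1$ in $\{0,1,\dots,2^m-2\}$. Consequently $\deg F=n-1$.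
   Context: $\mathbb{F}_{2^{rm}}\times\mathbb{F}_{2^m}$ is viewed as an $n$-dimensional $\mathbb{F}_2$-vector space ($\mathbb{F}_{2^m}\subseteq\mathbb{F}_{2^{rm}}$). The bivariate representation of a Boolean function on $\mathbb{F}_{2^{rm}}\times\mathbb{F}_{2^m}$ is the unique polynomial $\sum_{i=0}^{2^{rm}-1}\sum_{j=0}^{2^m-1}c_{i,j}x^iy^j$ with $c_{i,j}\in\mathbb{F}_{2^{rm}}$ agreeing with the function everywhere. $\deg F$ is the algebraic degree of $F$ (degree of its algebraic normal form in $n$ binary coordinates). *)

From HB Require Import structures.
From mathcomp Require Import all_boot all_order all_algebra all_field.
Set Implicit Arguments. Unset Strict Implicit. Unset Printing Implicit Defensive.
Import Order.TTheory GRing.Theory Num.Theory.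
Local Open Scope ring_scope.

(* L plays the role of F_{2^{rm}}; the subfield F_{2^m} is {y | y^(2^m) = y}. *)
Definition inSub (L : finFieldType) (m : nat) (y : L) : bool := y ^+ (2 ^ m) == y.

Definition inDelta (L : finFieldType) (r m : nat) (alpha : L) (k : nat) (g : L) : bool :=
  [exists i : 'I_(2 ^ (r * m) * 2), (k <= i <= k + 2 ^ (r * m).-1 - 1)%N && (g == alpha ^+ i)].

Definition Fsupp (L : finFieldType) (r m : nat) (u : int) (alpha : L) (s l : nat)
  (x y : L) : bool :=
  [exists y' : L, exists g : L,
     [&& inSub m y', y' != 0, inDelta r m alpha s g & (x, y) == (g * y' ^ u, y')]]
  || [exists g : L, inDelta r m alpha l g && ((x, y) == (g, 0))].

Definition bivF (L : finFieldType) (r m : nat) (u : int) (alpha : L) (s l : nat)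
  (x y : L) : L :=
  let q := (2 ^ m - 1)%N in
  let N := (2 ^ (r * m))%N in
  let e := (2 ^ (r * m).-1 - 1)%N in
  \sum_(1 <= i < N.-1 | ~~ (q %| i)%N)
      alpha ^- (i * s) * (1 + alpha ^- i) ^+ e * x ^+ i
        * y ^+ (q - `|((u * i%:Z) %% q%:Z)%Z|)%N
  + \sum_(1 <= j < (N.-1 %/ q)%N)
      alpha ^- (q * j * s) * (1 + alpha ^- (q * j)) ^+ e * x ^+ (q * j) * y ^+ q
  + \sum_(1 <= i < N.-1)
      alpha ^- (i * l) * (1 + alpha ^- i) ^+ e * x ^+ i * (1 + y ^+ q).

(* Algebraic degree of a Boolean function on F_2^n via its algebraic normal form:
   g(x) = sum_u a_u x^u with a_u = sum_{x <= u} g(x) (Moebius transform). *)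
Definition anf_coef (n : nat) (g : 'rV['F_2]_n -> 'F_2) (v : 'rV['F_2]_n) : 'F_2 :=
  \sum_(w : 'rV['F_2]_n | [forall i, (w ord0 i != 0) ==> (v ord0 i != 0)]) g w.

Definition hwt (n : nat) (v : 'rV['F_2]_n) : nat := #|[set i | v ord0 i != 0]|.

Definition alg_deg (n : nat) (g : 'rV['F_2]_n -> 'F_2) : nat :=
  \max_(v : 'rV['F_2]_n | anf_coef g v != 0) hwt v.

(* phi is an F_2-linear bijection from F_2^n onto F_{2^{rm}} x F_{2^m}
   (additive = F_2-linear; injective + image in L x K + cardinality => bijective) *)
Definition coord_iso (L : finFieldType) (m n : nat) (phi : 'rV['F_2]_n -> L * L) : Prop :=
  [/\ {morph phi : a b / a + b}, injective phi & forall v, inSub m (phi v).2].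

From HB Require Import structures.
From mathcomp Require Import all_boot all_order all_algebra all_field.
From mathcomp Require Import zify.
Set Implicit Arguments.
Unset Strict Implicit.
Unset Printing Implicit Defensive.

Import Order.TTheory GRing.Theory Num.Theory.
Local Open Scope ring_scope.

(* Write N = 2^(rm) and M = N/2.  In characteristic 2, (1 + b)^(M-1) is the
   geometric sum of b^t over t < M, so sum_i alpha^(-ik) (1 + alpha^(-i))^(M-1) z^i
   splits into M geometric sums of (z / alpha^(k+t))^i over 1 <= i <= N-2; each one
   is the indicator of z outside {0, alpha^(k+t)}, and since M is even their total is
   the indicator of z in Delta_k.  For y a nonzero element of the subfield (a
   (2^m-1)-th root of unity) y^(2^m-1-(ui mod 2^m-1)) = (y^u)^(-i), so the first two
   sums of the formula form this indicator at x / y^u while the third vanishes; for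
   y = 0 only the third sum survives and gives the indicator of Delta_l.
   A Boolean function on F_2^n has degree n - 1 iff its support has even size and
   nonzero vector sum.  The support has 2^m M points, and under an F_2-linear
   coordinate map the first component of its vector sum is
   (sum of Delta_s) (sum of y^u over y <> 0 in the subfield) + (sum of Delta_l); the
   middle factor vanishes because 2^m - 1 does not divide u, and the last term is
   alpha^l (1 - alpha^M) / (1 - alpha) <> 0. *)

Lemma subn1_dvd_expn_subn1 a k : (0 < a)%N -> (a - 1 %| a ^ k - 1)%N.
Proof.
move=> a_gt0; elim: k => [|k IHk]; first by rewrite subnn dvdn0.
have -> : (a ^ k.+1 - 1 = (a ^ k - 1) * a + (a - 1))%N.
  have : (0 < a ^ k)%N by rewrite expn_gt0 a_gt0.
  rewrite expnS; move: (a ^ k)%N; nia.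
by rewrite dvdn_add // dvdn_mulr.
Qed.

Lemma sum_nat_dvdn (V : nmodType) q D (F : nat -> V) : (0 < q)%N ->
  \sum_(0 <= i < q * D | (q %| i)%N) F i = \sum_(0 <= j < D) F (q * j)%N.
Proof.
move=> q_gt0; elim: D => [|D IHD]; first by rewrite muln0 !big_geq.
rewrite big_nat_recr //= -IHD mulnS addnC (@big_cat_nat _ _ _ (q * D)) //=; last lia.
congr (_ + _); rewrite big_ltn_cond; last lia.
rewrite dvdn_mulr // big1_seq ?addr0 // => i /andP[/dvdnP[c ->]].
rewrite mem_index_iota (mulnC c) (addnC _ q) -mulnS !ltn_pmul2l //; lia.
Qed.

Lemma sum_nat1_dvdn (V : zmodType) q D (F : nat -> V) : (0 < q)%N -> (0 < D)%N ->
  \sum_(1 <= i < q * D | (q %| i)%N) F i = \sum_(1 <= j < D) F (q * j)%N.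
Proof.
move=> q_gt0 D_gt0; have := @sum_nat_dvdn V q D F q_gt0.
by rewrite big_ltn_cond ?muln_gt0 ?q_gt0 // [in RHS]big_ltn // dvdn0 muln0 => /addrI.
Qed.

Lemma exprz_modz (R : unitRingType) (y : R) (u : int) q :
  y \is a GRing.unit -> (0 < q)%N -> y ^+ q = 1 -> y ^ u = y ^+ `|(u %% q%:Z)%Z|%N.
Proof.
move=> y_unit q_gt0 yq.
rewrite {1}(divz_eq u q%:Z) exprzDr // (mulrC (_ %/ _)%Z) -exprz_exp -exprnP yq exp1rz mul1r.
by rewrite exprnP gez0_abs // modz_ge0 // eqz_nat -lt0n.
Qed.

Lemma sum_expr_unity_root (R : idomainType) n (c : R) :
  c ^+ n = 1 -> c != 1 -> \sum_(i < n) c ^+ i = 0.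
Proof.
move=> cn1 c_neq1; have := subrXX 1 c n.
rewrite expr1n cn1 subrr => /esym/eqP; rewrite mulf_eq0 subr_eq0 eq_sym (negbTE c_neq1) /=.
by move=> /eqP sum0; rewrite -[RHS]sum0; apply: eq_bigr => i _; rewrite expr1n mul1r.
Qed.

Section CharTwo.
Variable R : comNzRingType.
Hypothesis R2 : 2%N \in [pchar R].

Lemma pnat_pchar2_exp2 j : (GRing.pchar R).-nat (2 ^ j)%N.
Proof. by rewrite (eq_pnat _ (pcharf_eq R2)) pnatX pnat_id. Qed.

Lemma exprD1_exp2_subn1 (b : R) j : (1 + b) ^+ (2 ^ j - 1) = \sum_(t < 2 ^ j) b ^+ t.
Proof.
elim: j => [|j IHj]; first by rewrite big_ord1.
have -> : (2 ^ j.+1 - 1 = 2 ^ j + (2 ^ j - 1))%N by rewrite expnS; have := expn_gt0 2 j; lia.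
rewrite exprD IHj exprDn_pchar ?pnat_pchar2_exp2 // expr1n mulrDl mul1r mulr_sumr.
rewrite expnS mul2n -addnn big_split_ord /=; congr (_ + _); apply: eq_bigr => t _.
by rewrite exprD.
Qed.

End CharTwo.

Section RootsOfUnity.
Variables (L : finFieldType) (n : nat) (beta : L).
Hypothesis beta_prim : n.-primitive_root beta.

Lemma sum_unity_roots (W : nmodType) (G : L -> W) :
  \sum_(y | n.-unity_root y) G y = \sum_(j < n) G (beta ^+ j).
Proof.
have beta_inj : injective (fun j : 'I_n => beta ^+ j).
  by move=> i j /eqP; rewrite (eq_prim_root_expr beta_prim) !modn_small // => /eqP/val_inj.
rewrite (eq_bigl (mem [set beta ^+ j | j : 'I_n])) => [|y]; last first.
  rewrite inE unity_rootE; apply/eqP/imsetP => [/(prim_rootP beta_prim)[j ->]|[j _ ->]].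
    by exists j.
  by rewrite exprAC (prim_expr_order beta_prim) expr1n.
by rewrite big_imset // => i j _ _ /beta_inj.
Qed.

Lemma card_unity_roots : #|[pred y : L | n.-unity_root y]| = n.
Proof. by rewrite -sum1_card (@sum_unity_roots nat (fun=> 1%N)) sum1_card card_ord. Qed.

Lemma sum_unity_roots_exprz (u : int) :
  ~~ (n %| `|u|)%N -> \sum_(y : L | n.-unity_root y) y ^ u = 0.
Proof.
move=> n_ndvd_u; rewrite sum_unity_roots.
under eq_bigr => j _ do rewrite exprnP exprzAC -exprnP.
apply: sum_expr_unity_root.
  by rewrite exprnP exprzAC -exprnP (prim_expr_order beta_prim) exp1rz.
apply: contra n_ndvd_u; case: u => k; rewrite ?NegzE ?invr_eq1 -?exprnP.
  by rewrite (prim_order_dvd beta_prim).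
by rewrite abszN -(prim_order_dvd beta_prim).
Qed.

End RootsOfUnity.

Section FiniteFieldCharTwo.
Variables (L : finFieldType) (K : nat).
Hypothesis cardL : #|L| = (2 ^ K)%N.

Fact finField_pchar2 : 2%N \in [pchar L].
Proof. exact: card_finPcharP cardL _. Qed.

Lemma sum_expr_finField (w : L) :
  \sum_(1 <= i < #|L|.-1) w ^+ i = ((w != 0) && (w != 1))%:R.
Proof.
have L2 := finField_pchar2; have L_gt1 := finNzRing_gt1 L.
have K_gt0 : (0 < K)%N by rewrite lt0n; apply: contraTneq L_gt1 => K0; rewrite cardL K0.
have cardL2 : #|L| = (2 * 2 ^ K.-1)%N by rewrite -expnS prednK.
have [->|w_neq0] /= := eqVneq w 0.
  by rewrite big_nat_cond big1 // => i /andP[/andP[i_gt0 _] _]; rewrite expr0n eqn0Ngt i_gt0.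
have [->|w_neq1] /= := eqVneq w 1.
  rewrite (eq_bigr (fun=> 1)) => [|i _]; last by rewrite expr1n.
  rewrite sumr_const_nat.
  have -> : (#|L|.-1 - 1 = 2 * (2 ^ K.-1 - 1))%N by rewrite cardL2; have := expn_gt0 2 K.-1; lia.
  by rewrite natrM (pcharf0 L2) mul0r.
have w_order : w ^+ #|L|.-1 = 1.
  by apply: (mulfI w_neq0); rewrite -exprS prednK ?expf_card ?mulr1 // cardL expn_gt0.
have := sum_expr_unity_root w_order w_neq1.
rewrite -(big_mkord xpredT (fun i => w ^+ i)) big_ltn -?subn1 ?subn_gt0 // subn1 expr0.
by move/eqP; rewrite addr_eq0 (oppr_pchar2 L2) => /eqP.
Qed.

Variable alpha : L.
Hypothesis alpha_prim : (#|L|.-1).-primitive_root alpha.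

Fact prim_root_neq0 : alpha != 0.
Proof. by rewrite (prim_root_eq0 alpha_prim) -lt0n -subn1 subn_gt0 finNzRing_gt1. Qed.

Definition arc (k M : nat) : {set L} := [set alpha ^+ (k + t) | t : 'I_M].

Section ArcOfLength.
Variables (k M : nat).
Hypothesis M_le : (M <= #|L|.-1)%N.

Lemma arc_param_inj : injective (fun t : 'I_M => alpha ^+ (k + t)).
Proof.
move=> t t' /eqP; rewrite (eq_prim_root_expr alpha_prim) eqn_modDl !modn_small.
- by move/eqP/val_inj.
- exact: leq_trans (ltn_ord t') M_le.
- exact: leq_trans (ltn_ord t) M_le.
Qed.

Lemma sum_arc (W : nmodType) (h : L -> W) :
  \sum_(g in arc k M) h g = \sum_(t < M) h (alpha ^+ (k + t)).
Proof. by rewrite big_imset // => t t' _ _ /arc_param_inj. Qed.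

Lemma card_arc : #|arc k M| = M.
Proof. by rewrite card_imset ?card_ord //; apply: arc_param_inj. Qed.

End ArcOfLength.

Lemma sum_arc_neq0 k M : (0 < M < #|L|.-1)%N -> \sum_(g in arc k M) g != 0.
Proof.
case/andP=> M_gt0 M_lt; rewrite sum_arc; last exact: ltnW.
under eq_bigr => t _ do rewrite exprD.
rewrite -mulr_sumr mulf_neq0 ?expf_neq0 ?prim_root_neq0 //.
have := subrXX 1 alpha M; rewrite expr1n.
under [X in _ = _ * X]eq_bigr => t _ do rewrite expr1n mul1r.
move=> /eqP geom; apply/eqP => sum0; move: geom.
rewrite sum0 mulr0 subr_eq0 eq_sym -(prim_order_dvd alpha_prim).
by move/(dvdn_leq M_gt0); rewrite leqNgt M_lt.
Qed.

Lemma arc_indicator k j (z : L) : (0 < j < K)%N ->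
  \sum_(1 <= i < #|L|.-1) alpha ^- (i * k) * (1 + alpha ^- i) ^+ (2 ^ j - 1) * z ^+ i
  = (z \in arc k (2 ^ j))%:R.
Proof.
case/andP=> j_gt0 j_lt; have L2 := finField_pchar2.
have M_lt : (2 ^ j < #|L|)%N by rewrite cardL ltn_exp2l.
have alpha_neq0 := prim_root_neq0.
under eq_bigr => i _ do rewrite exprD1_exp2_subn1 // mulr_sumr mulr_suml.
rewrite exchange_big /=.
have expr_quot t i : alpha ^- (i * k) * (alpha ^- i) ^+ t * z ^+ i = (z / alpha ^+ (k + t)) ^+ i.
  by rewrite exprMn exprVn mulrC -invfM -exprM -exprD exprVn -exprM mulnC mulnDl (mulnC i).
under eq_bigr => t _ do under eq_bigr => i _ do rewrite expr_quot.
have quot_neq0 t : (z / alpha ^+ (k + t) != 0) = (z != 0).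
  by rewrite mulf_eq0 invr_eq0 expf_eq0 (negbTE alpha_neq0) andbF orbF.
have quot_eq1 t : (z / alpha ^+ (k + t) == 1) = (z == alpha ^+ (k + t)).
  have alpha_kt_neq0 := expf_neq0 (k + t) alpha_neq0.
  by rewrite (can2_eq (divfK alpha_kt_neq0) (mulfK alpha_kt_neq0)) mul1r.
under eq_bigr => t _ do rewrite sum_expr_finField quot_neq0 quot_eq1.
have [->|z_neq0] /= := eqVneq z 0.
  rewrite big1 // (_ : (0 \in _) = false) //; apply/imsetP => -[t _ /eqP].
  by rewrite eq_sym expf_eq0 (negbTE alpha_neq0) andbF.
have notb_char2 (b : bool) : (~~ b)%:R = 1 + b%:R :> L.
  by case: b; rewrite ?addr0 // -[1 + 1]/(2%:R) (pcharf0 L2).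
under eq_bigr => t _ do rewrite notb_char2.
rewrite big_split /= sumr_const card_ord -mulr_natl mulr1 natrX (pcharf0 L2) expr0n.
have M_le : (2 ^ j <= #|L|.-1)%N by rewrite -ltnS prednK // (leq_ltn_trans _ M_lt).
rewrite eqn0Ngt j_gt0 add0r -(sum_arc k M_le (fun g => (z == g)%:R)).
have [z_arc|z_narc] := boolP (z \in arc k (2 ^ j)).
  by rewrite (bigD1 z) //= eqxx big1 ?addr0 // => g /andP[_ /negPf]; rewrite eq_sym => ->.
by rewrite big1 // => g g_arc; case: eqP z_narc => // ->; rewrite g_arc.
Qed.

End FiniteFieldCharTwo.

Lemma F2_eq0_or_eq1 (x : 'F_2) : x = 0 \/ x = 1.
Proof. by case: x => -[|[|//]] x_lt; [left|right]; apply: val_inj. Qed.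

Section AlgebraicDegree.
Variables (n : nat) (g : 'rV['F_2]_n -> 'F_2).

Lemma anf_coef_full (v : 'rV['F_2]_n) :
  (forall i, v 0 i != 0) -> anf_coef g v = \sum_w g w.
Proof.
by move=> v_full; apply: eq_bigl => w; apply/forallP => i; rewrite v_full implybT.
Qed.

Lemma alg_deg_leq_pred : \sum_w g w = 0 -> (alg_deg g <= n.-1)%N.
Proof.
move=> sum_g0; apply/bigmax_leqP => v anf_v.
have [i /negPn/eqP v_i] : exists i, ~~ (v 0 i != 0).
  apply/existsP; apply: contraR anf_v => /existsPn v_full.
  by rewrite anf_coef_full ?sum_g0 // => i; move/negPn: (v_full i).
rewrite -[n in n.-1]card_ord -(cardsC1 i); apply/subset_leq_card/subsetP => j.
by rewrite !inE; apply: contraNneq => ->; rewrite v_i.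
Qed.

Definition hole_row (i0 : 'I_n) : 'rV['F_2]_n := \row_i (i != i0)%:R.

Lemma hwt_hole_row i0 : hwt (hole_row i0) = n.-1.
Proof.
rewrite /hwt -[n in n.-1]card_ord -(cardsC1 i0); apply: eq_card => i.
by rewrite !inE mxE; case: (i != i0); rewrite ?oner_neq0 ?eqxx.
Qed.

Lemma anf_coef_hole_row i0 :
  \sum_w g w = 0 -> anf_coef g (hole_row i0) = (\sum_w g w *: w) 0 i0.
Proof.
move=> sum_g0.
have -> : anf_coef g (hole_row i0) = \sum_(w : 'rV_n | w 0 i0 == 0) g w.
  apply: eq_bigl => w; apply/forallP/eqP => [/(_ i0)|w_i0 i].
    by rewrite mxE eqxx implybF => /negPn/eqP.
  by rewrite mxE; case: (eqVneq i i0) => [->|]; rewrite ?w_i0 ?eqxx ?oner_neq0 ?implybT.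
move/eqP: sum_g0; rewrite (bigID (fun w : 'rV_n => w 0 i0 == 0)) /= addr_eq0 => /eqP ->.
rewrite oppr_pchar2 ?pchar_Fp // summxE [RHS](bigID (fun w : 'rV_n => w 0 i0 == 0)) /=.
rewrite [X in _ = X + _]big1 ?add0r => [|w /eqP w_i0]; last by rewrite mxE w_i0 mulr0.
apply: eq_bigr => w w_i0; rewrite mxE.
by case: (F2_eq0_or_eq1 (w 0 i0)) w_i0 => ->; rewrite ?eqxx ?mulr1.
Qed.

Lemma alg_deg_eq_pred :
  \sum_w g w = 0 -> \sum_w g w *: w != 0 -> alg_deg g = n.-1.
Proof.
move=> sum_g0 sum_w_neq0.
have [i0 sum_i0] : exists i0, (\sum_w g w *: w) 0 i0 != 0.
  apply/existsP; apply: contraR sum_w_neq0 => /existsPn sum_w0.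
  by apply/eqP/rowP => i; rewrite mxE; apply/eqP/negPn/sum_w0.
apply/eqP; rewrite eqn_leq alg_deg_leq_pred // -(hwt_hole_row i0).
by apply: leq_bigmax_cond; rewrite anf_coef_hole_row.
Qed.

End AlgebraicDegree.

Lemma exists_additive_embedding_rV_F2 (V : finZmodType) (S : {set V}) k :
  (forall x : V, x + x = 0) -> 0 \in S -> {in S &, forall x y, x + y \in S} ->
  (2 ^ k <= #|S|)%N ->
  exists phi : 'rV['F_2]_k -> V,
    [/\ {morph phi : a b / a + b}, injective phi & forall v, phi v \in S].
Proof.
move=> V2 S0 SD; elim: k => [|k IHk] S_k.
  exists (fun=> 0); split=> [a b|a b _|//]; first by rewrite addr0.
  by rewrite (thinmx0 a) (thinmx0 b).
have [|phi [phiD phi_inj phiS]] := IHk; first by apply: leq_trans S_k; rewrite leq_exp2l.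
have [s sS s_new] : exists2 s, s \in S & s \notin [set phi v | v in 'rV['F_2]_k].
  apply/subsetPn; apply: contraTN S_k => /subset_leq_card.
  rewrite card_imset // card_mx card_Fp // mul1n -ltnNge expnS => S_le.
  by apply: leq_ltn_trans S_le _; rewrite mul2n -addnn -addn1 leq_add2l expn_gt0.
have s_out x y : phi x + s != phi y.
  apply: contraNneq s_new => phi_xy; apply/imsetP; exists (x + y) => //.
  by rewrite phiD -phi_xy addrA V2 add0r.
pose bit (v : 'rV['F_2]_(1 + k)) := lsubmx v 0 0.
pose ext v := phi (rsubmx v) + (if bit v == 0 then 0 else s).
rewrite -[k.+1]add1n; exists ext; split.
- move=> a b; rewrite /ext linearD phiD -!addrA; congr (_ + _); rewrite addrCA; congr (_ + _).
  rewrite /bit linearD [_ 0 0]mxE /=.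
  by case: (F2_eq0_or_eq1 (lsubmx a 0 0)) => ->; case: (F2_eq0_or_eq1 (lsubmx b 0 0)) => ->;
    rewrite ?addr0 ?add0r ?V2.
- move=> a b ext_ab.
  have bit_ab : bit a = bit b.
    case: (F2_eq0_or_eq1 (bit a)) => ba; case: (F2_eq0_or_eq1 (bit b)) => bb; rewrite ba bb //;
      move: ext_ab; rewrite /ext ba bb /= addr0 => /eqP; rewrite ?(negbTE (s_out _ _)) //.
    by rewrite eq_sym (negbTE (s_out _ _)).
  move: ext_ab; rewrite /ext bit_ab => /addIr/phi_inj r_ab.
  rewrite -[a]hsubmxK -[b]hsubmxK r_ab; congr row_mx.
  by apply/matrixP => i j; rewrite !ord1.
- by move=> v; rewrite SD //; case: ifP.
Qed.

Lemma coprime_ndvdn a q : coprime a q -> (1 < q)%N -> ~~ (q %| a)%N.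
Proof.
move=> co_aq q_gt1; apply/negP => /coprime_dvdl/(_ co_aq).
by rewrite /coprime gcdnn => /eqP q1; rewrite q1 in q_gt1.
Qed.

Lemma ltn_absz_modz (a : int) q : (0 < q)%N -> (`|(a %% q%:Z)%Z|%N < q)%N.
Proof.
move=> q_gt0; rewrite -ltz_nat gez0_abs ?modz_ge0 ?ltz_pmod //;
  by rewrite ?eqz_nat -?lt0n ?ltz_nat.
Qed.

Lemma inSub0 (L : finFieldType) m : inSub m (0 : L).
Proof. by rewrite /inSub expr0n expn_eq0. Qed.

Section BivariateRepresentation.
Variables (L : finFieldType) (r m : nat) (u : int) (alpha : L) (s l : nat).
Hypotheses (cardL : #|L| = (2 ^ (r * m))%N) (r_gt0 : (0 < r)%N) (m_gt1 : (1 < m)%N).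
Hypothesis alpha_prim : (#|L|.-1).-primitive_root alpha.
Hypotheses (s_le : (s <= 2 ^ (r * m) - 2)%N) (l_le : (l <= 2 ^ (r * m) - 2)%N).

Local Notation q := (2 ^ m - 1)%N.
Local Notation M := (2 ^ (r * m).-1)%N.
Local Notation F := (Fsupp r m u alpha s l).

Fact rm_gt1 : (1 < r * m)%N.
Proof. by rewrite (leq_trans m_gt1) // leq_pmull. Qed.

Fact card_L_double : #|L| = (2 * M)%N.
Proof. by rewrite cardL -expnS prednK // ltnW ?rm_gt1. Qed.

Fact M_gt1 : (1 < M)%N.
Proof. by rewrite -[1%N]/(2 ^ 0)%N ltn_exp2l // -subn1 subn_gt0 rm_gt1. Qed.

Fact q_gt1 : (1 < q)%N.
Proof. by rewrite ltn_subRL -[(1 + 1)%N]/(2 ^ 1)%N ltn_exp2l. Qed.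

Fact q_dvd_card : (q %| #|L|.-1)%N.
Proof. by rewrite cardL -subn1 mulnC expnM subn1_dvd_expn_subn1 // expn_gt0. Qed.

Fact pchar2_L : 2%N \in [pchar L].
Proof. exact: finField_pchar2 cardL. Qed.

Fact unity_root_neq0 (y : L) : q.-unity_root y -> y != 0.
Proof.
rewrite unity_rootE; apply: contraTneq => ->.
by rewrite expr0n eqn0Ngt (ltnW q_gt1) eq_sym oner_eq0.
Qed.

Lemma inSubE (y : L) : inSub m y = (y == 0) || q.-unity_root y.
Proof.
rewrite /inSub unity_rootE; have [->|y_neq0] /= := eqVneq y 0; first exact: inSub0.
rewrite -{1}(subnK (expn_gt0 2 m)) addn1 exprS.
by rewrite -{3}[y]mulr1 (inj_eq (mulfI y_neq0)).
Qed.

Lemma inSubD (x y : L) : inSub m x -> inSub m y -> inSub m (x + y).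
Proof. by rewrite /inSub exprDn_pchar ?pnat_pchar2_exp2 ?pchar2_L // => /eqP-> /eqP->. Qed.

Lemma card_inSub : #|[set y : L | inSub m y]| = (2 ^ m)%N.
Proof.
rewrite (eq_card (B := [predU1 0 & [pred y : L | q.-unity_root y]])) => [|y]; last first.
  by rewrite !inE inSubE.
have unity0 : ~~ q.-unity_root (0 : L) by apply/negP => /unity_root_neq0; rewrite eqxx.
rewrite cardU1 (card_unity_roots (dvdn_prim_root alpha_prim q_dvd_card)) inE unity0.
by rewrite add1n subn1 prednK ?expn_gt0.
Qed.

Lemma inDelta_arc k g : (k <= 2 ^ (r * m) - 2)%N ->
  inDelta r m alpha k g = (g \in arc alpha k M).
Proof.
move=> k_le; have M_gt0 : (0 < M)%N := ltnW M_gt1.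
have N_eq : (2 ^ (r * m) = 2 * M)%N by rewrite -cardL card_L_double.
apply/existsP/imsetP => [[i /andP[/andP[k_i i_le] /eqP ->]]|[t _ ->]].
  have t_lt : (i - k < M)%N by lia.
  by exists (Ordinal t_lt); rewrite //= subnKC.
have i_lt : (k + t < 2 ^ (r * m) * 2)%N by have := ltn_ord t; lia.
by exists (Ordinal i_lt); rewrite /= leq_addr eqxx andbT /=; have := ltn_ord t; lia.
Qed.

Lemma Fsupp_0 x : F x 0 = inDelta r m alpha l x.
Proof.
rewrite /Fsupp; case: existsP => [[y /existsP[g /and4P[_ y_neq0 _ /eqP[_ y0]]]]|_] /=.
  by rewrite -y0 eqxx in y_neq0.
by apply/existsP/idP => [[g /andP[g_l /eqP[->]]]|x_l] //; exists x; rewrite x_l eqxx.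
Qed.

Lemma Fsupp_unit x y : inSub m y -> y != 0 -> F x y = inDelta r m alpha s (x / y ^ u).
Proof.
move=> y_sub y_neq0; rewrite /Fsupp.
have yu_neq0 : y ^ u != 0 by rewrite -unitfE unitrXz // unitfE.
rewrite [X in _ || X](_ : _ = false); last first.
  by apply/existsP => -[g /andP[_ /eqP[_ y0]]]; rewrite y0 eqxx in y_neq0.
rewrite orbF; apply/existsP/idP => [[y' /existsP[g /and4P[_ _ g_s /eqP[-> <-]]]]|x_s].
  by rewrite mulfK.
by exists y; apply/existsP; exists (x / y ^ u); rewrite y_sub y_neq0 x_s divfK ?eqxx.
Qed.

Lemma Fsupp_inSub x y : F x y -> inSub m y.
Proof.
case/orP=> [/existsP[y' /existsP[g /and4P[y'_sub _ _ /eqP[_ ->]]]]|] //.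
by case/existsP=> g /andP[_ /eqP[_ ->]]; apply: inSub0.
Qed.

Lemma bivF_0 x : bivF r m u alpha s l x 0 =
  \sum_(1 <= i < #|L|.-1) alpha ^- (i * l) * (1 + alpha ^- i) ^+ (M - 1) * x ^+ i.
Proof.
have q_gt0 : (0 < q)%N by rewrite ltnW ?q_gt1.
rewrite /bivF /= [X in X + _ + _]big1 => [|i _]; last first.
  by rewrite expr0n subn_eq0 leqNgt ltn_absz_modz // mulr0.
rewrite [X in _ + X + _]big1 => [|j _]; last by rewrite expr0n eqn0Ngt q_gt0 mulr0.
by rewrite !add0r cardL; apply: eq_bigr => i _; rewrite expr0n eqn0Ngt q_gt0 addr0 mulr1.
Qed.

Lemma bivF_unity_root x y : q.-unity_root y ->
  bivF r m u alpha s l x y =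
  \sum_(1 <= i < #|L|.-1) alpha ^- (i * s) * (1 + alpha ^- i) ^+ (M - 1) * (x / y ^ u) ^+ i.
Proof.
move=> y_unity; have y_neq0 := unity_root_neq0 y_unity.
move: y_unity; rewrite unity_rootE => /eqP yq.
have q_gt0 : (0 < q)%N by rewrite ltnW ?q_gt1.
have yu_expr i : (y ^ u) ^+ i = y ^+ `|((u * i%:Z) %% q%:Z)%Z|%N.
  by rewrite exprnP exprz_exp (exprz_modz _ _ q_gt0) // unitfE.
rewrite /bivF /= [X in _ + X]big1 ?addr0 => [|i _]; last first.
  by rewrite yq addrr_pchar2 ?pchar2_L // mulr0.
(* For q | i the first sum would carry y^q: the second sum is its q | i part. *)
rewrite cardL [RHS](bigID (fun i => q %| i)%N) /= addrC; congr (_ + _).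
  apply: eq_bigr => i _; rewrite exprMn exprVn yu_expr mulrA; congr (_ * _).
  set c := `|(_ %% _)%Z|%N; apply: (mulIf (expf_neq0 c y_neq0)).
  rewrite mulVf ?expf_neq0 // -exprD subnK ?yq //.
  exact/ltnW/ltn_absz_modz.
have qD : ((2 ^ (r * m)).-1 = q * ((2 ^ (r * m)).-1 %/ q))%N.
  by rewrite [RHS]mulnC divnK // -cardL q_dvd_card.
have D_gt0 : (0 < (2 ^ (r * m)).-1 %/ q)%N.
  rewrite divn_gt0 // dvdn_leq -?cardL ?q_dvd_card // card_L_double.
  by have := M_gt1; lia.
rewrite [in RHS]qD sum_nat1_dvdn //; apply: eq_bigr => j _.
by rewrite exprMn exprVn yu_expr PoszM (mulrCA u) modzMr yq invr1 !mulr1.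
Qed.

Lemma Fsupp_bivF x y : inSub m y -> (F x y)%:R = bivF r m u alpha s l x y.
Proof.
have j_range : (0 < (r * m).-1 < r * m)%N by have := rm_gt1; lia.
rewrite inSubE => /orP[/eqP->|y_unity].
  by rewrite Fsupp_0 bivF_0 inDelta_arc // (arc_indicator cardL alpha_prim _ _ j_range).
rewrite Fsupp_unit ?inSubE ?y_unity ?orbT ?unity_root_neq0 // bivF_unity_root //.
by rewrite inDelta_arc // (arc_indicator cardL alpha_prim _ _ j_range).
Qed.

Lemma sum_inDelta (W : nmodType) k (c : L) (G : L -> W) :
  (k <= 2 ^ (r * m) - 2)%N -> c != 0 ->
  \sum_x (if inDelta r m alpha k (x / c) then G x else 0)
  = \sum_(g in arc alpha k M) G (g * c).
Proof.
move=> k_le c_neq0; rewrite (reindex_inj (mulIf c_neq0)) [RHS]big_mkcond /=.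
by apply: eq_bigr => x _; rewrite mulfK // inDelta_arc.
Qed.

Lemma sum_Fsupp (W : nmodType) (h : L * L -> W) :
  \sum_(z | F z.1 z.2) h z =
  \sum_(y | q.-unity_root y) \sum_(g in arc alpha s M) h (g * y ^ u, y)
  + \sum_(g in arc alpha l M) h (g, 0).
Proof.
rewrite big_mkcond; transitivity (\sum_y \sum_x (if F x y then h (x, y) else 0)).
  by rewrite exchange_big pair_bigA; apply: eq_bigr => -[x y].
rewrite (bigD1 0) //= addrC; congr (_ + _); last first.
  rewrite (eq_bigr (fun x => if inDelta r m alpha l (x / 1) then h (x, 0) else 0)).
    by rewrite sum_inDelta ?oner_neq0 //; apply: eq_bigr => g _; rewrite mulr1.
  by move=> x _; rewrite Fsupp_0 divr1.
rewrite (bigID (fun y => q.-unity_root y)) /= [X in _ + X]big1 ?addr0 => [|y].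
  rewrite (eq_bigl (fun y => q.-unity_root y)) => [|y]; last first.
    by apply: andb_idl => /unity_root_neq0.
  apply: eq_bigr => y y_unity; have y_neq0 := unity_root_neq0 y_unity.
  have y_sub : inSub m y by rewrite inSubE y_unity orbT.
  rewrite (eq_bigr (fun x => if inDelta r m alpha s (x / y ^ u) then h (x, y) else 0)).
    by rewrite sum_inDelta // -unitfE unitrXz // unitfE.
  by move=> x _; rewrite Fsupp_unit.
case/andP=> y_neq0 y_nunity; apply: big1 => x _; case: ifP => // /Fsupp_inSub.
by rewrite inSubE (negPf y_neq0) (negPf y_nunity).
Qed.

Lemma card_Fsupp : #|[pred z : L * L | F z.1 z.2]| = (2 ^ m * M)%N.
Proof.
have M_le : (M <= #|L|.-1)%N by have := M_gt1; rewrite card_L_double; lia.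
rewrite -sum1_card sum_Fsupp !sum1_card card_arc // sum_nat_const.
rewrite (card_unity_roots (dvdn_prim_root alpha_prim q_dvd_card)) card_arc //.
by rewrite -[(2 ^ m)%N in RHS](subnK (expn_gt0 2 m)) addn1 mulSnr.
Qed.

Lemma sum_Fsupp_fst : ~~ (q %| `|u|)%N ->
  \sum_(z | F z.1 z.2) z.1 = \sum_(g in arc alpha l M) g.
Proof.
move=> q_ndvd_u; rewrite (sum_Fsupp (fun z => z.1)) /= exchange_big /= big1 ?add0r // => g _.
by rewrite -mulr_sumr (sum_unity_roots_exprz (dvdn_prim_root alpha_prim q_dvd_card)) ?mulr0.
Qed.

Local Notation n := ((r + 1) * m)%N.
Local Notation LK := [set z : L * L | inSub m z.2].

Lemma card_LK : #|LK| = (2 ^ n)%N.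
Proof.
have -> : LK = setX [set: L] [set y : L | inSub m y] by apply/setP => -[x y]; rewrite !inE.
by rewrite cardsX cardsT card_inSub cardL -expnD mulnDl mul1n.
Qed.

HB.instance Definition _ := GRing.Zmodule.on (L * L)%type.

Lemma exists_coord_iso : exists phi : 'rV['F_2]_n -> L * L, coord_iso m phi.
Proof.
have [||||phi [phiD phi_inj phi_LK]] := @exists_additive_embedding_rV_F2 _ LK n.
- by case=> x y; change ((x + x, y + y) = (0, 0)); rewrite !(addrr_pchar2 pchar2_L).
- by rewrite inE inSub0.
- by move=> [x y] [x' y']; rewrite !inE; apply: inSubD.
- by rewrite card_LK.
by exists phi; split=> // v; have := phi_LK v; rewrite inE.
Qed.

Lemma sum_coord_iso (W : nmodType) (phi : 'rV['F_2]_n -> L * L) (h : L * L -> W) :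
  coord_iso m phi ->
  \sum_(v | F (phi v).1 (phi v).2) h (phi v) = \sum_(z | F z.1 z.2) h z.
Proof.
case=> _ phi_inj phi_LK.
have phi_onto : [set phi v | v in 'rV['F_2]_n] = LK.
  apply/eqP; rewrite eqEcard card_LK card_imset // card_mx card_Fp // mul1n leqnn andbT.
  by apply/subsetP => _ /imsetP[v _ ->]; rewrite inE.
rewrite -(big_imset _ (in2W phi_inj)) /=; apply: eq_bigl => z; apply/imsetP/idP => [[v]|z_F].
  by move=> v_F ->.
have : z \in LK by rewrite inE (Fsupp_inSub z_F).
by rewrite -phi_onto => /imsetP[v _ z_v]; exists v; rewrite // unfold_in -z_v.
Qed.

Lemma alg_deg_Fsupp (phi : 'rV['F_2]_n -> L * L) : ~~ (q %| `|u|)%N -> coord_iso m phi ->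
  alg_deg (fun v => (F (phi v).1 (phi v).2)%:R) = (n - 1)%N.
Proof.
move=> q_ndvd_u phi_iso; have [phiD _ _] := phi_iso.
have phi0 : phi 0 = 0 by apply: (addrI (phi 0)); rewrite -phiD !addr0.
rewrite subn1; apply: alg_deg_eq_pred.
  rewrite (eq_bigr (fun v => if F (phi v).1 (phi v).2 then 1 else 0)) => [|v _]; last by case: ifP.
  rewrite -big_mkcond (sum_coord_iso (fun=> 1)) // sumr_const card_Fsupp.
  by rewrite -mulr_natl mulr1 natrM natrX (pcharf0 (pchar_Fp _)) // expr0n gtn_eqF ?mul0r // ltnW.
rewrite (eq_bigr (fun v => if F (phi v).1 (phi v).2 then v else 0)) => [|v _]; last first.
  by case: ifP; rewrite ?scale1r ?scale0r.
have M_range : (0 < M < #|L|.-1)%N by have := M_gt1; rewrite card_L_double; lia.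
rewrite -big_mkcond; apply: contraTneq (sum_arc_neq0 alpha_prim l M_range) => sum0.
have fstD : {morph (@fst L L) : a b / a + b} by [].
rewrite -(sum_Fsupp_fst q_ndvd_u) -(sum_coord_iso (fun z => z.1) phi_iso).
rewrite -(big_morph _ fstD (erefl : (0 : L * L).1 = 0)).
by rewrite -(big_morph phi phiD phi0) sum0 phi0 negbK.
Qed.

End BivariateRepresentation.

Theorem theorem4 (L : finFieldType) (r m : nat) (u : int) (alpha : L) (s l : nat) :
  odd r -> (1 <= r)%N -> (3 <= m)%N ->
  #|L| = (2 ^ (r * m))%N ->
  coprimez u (2 ^ m - 1)%N ->
  (#|L|.-1).-primitive_root alpha ->
  (s <= 2 ^ (r * m) - 2)%N -> (l <= 2 ^ (r * m) - 2)%N ->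
  (forall x y : L, inSub m y ->
     (Fsupp r m u alpha s l x y)%:R = bivF r m u alpha s l x y)
  /\ (exists phi : 'rV['F_2]_((r + 1) * m) -> L * L, coord_iso m phi)
  /\ (forall phi : 'rV['F_2]_((r + 1) * m) -> L * L, coord_iso m phi ->
        alg_deg (fun v => (Fsupp r m u alpha s l (phi v).1 (phi v).2)%:R)
        = ((r + 1) * m - 1)%N).
Proof.
move=> _ r_gt0 m_ge3 cardL u_coprime alpha_prim s_le l_le.
have m_gt1 : (1 < m)%N by apply: leq_trans m_ge3.
have q_ndvd_u : ~~ (2 ^ m - 1 %| `|u|)%N.
  by rewrite coprimezE absz_nat in u_coprime; apply: coprime_ndvdn u_coprime (q_gt1 m_gt1).
split; [|split].
- by move=> x y; apply: Fsupp_bivF.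
- exact: exists_coord_iso cardL m_gt1 alpha_prim.
- by move=> phi; apply: alg_deg_Fsupp.
Qed.
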